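(* Let $k\geq1$ be an integer and let $\psi\in\Psi_{2k+2}$. For $d\in\{2,2k+2\}$ let $b_{n,d}$ denote the $d$-dimensional Schoenberg coefficients of $\psi$; in particular $b_{n,2}$ are its Legendre coefficients, i.e. $\psi(\theta)=\sum_{n\ge0}b_{n,2}P_n(\cos\theta)$. Then for every integer $n\ge0$, \[ b_{n,2k+2}=\sum_{i=0}^k u_i(n,k)\,b_{n+2i,2}, \] where \[ u_i(n,k)=(-1)^i\frac{(2k-1)!!}{2^k}\binom{k}{i}\binom{2k+n}{n}\frac{1}{(n+i+1/2)_{(k-i)}\,(n+k+3/2)_{(i)}}. \]
   Context: For an integer $d\ge1$, $\mathbb{S}^d=\{x\in\mathbb{R}^{d+1}:\|x\|=1\}$ and $\theta(x,y)=\arccos(\langle x,y\rangle)$ is the great circle distance. $\Psi_d$ denotes the class of continuous functions $\psi:[0,\pi]\to\mathbb{R}$ with $\psi(0)=1$ such that $(x,y)\mapsto\psi(\theta(x,y))$ is positive definite on $\mathbb{S}^d$, i.e. $\sum_{i,j=1}^m c_ic_j\psi(\theta(x_i,x_j))\ge0$ for all $m\ge1$, all real $c_1,\dots,c_m$ and all distinct $x_1,\dots,x_m\in\mathbb{S}^d$. One has $\Psi_1\supset\Psi_2\supset\cdots$, and (Schoenberg) $\psi\in\Psi_d$ iff $\psi(\theta)=\sum_{n=0}^\infty b_{n,d}\,\frac{C_n^{(d-1)/2}(\cos\theta)}{C_n^{(d-1)/2}(1)}$ for unique coefficients $b_{n,d}\ge0$ with $\sum_n b_{n,d}=1$; these $b_{n,d}$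 are the $d$-dimensional Schoenberg coefficients of $\psi$. Here $C_n^\lambda$ are Gegenbauer polynomials, and $C_n^{1/2}=P_n$ are the Legendre polynomials (with $P_n(1)=1$). Notation: $(2k-1)!!=\prod_{j=1}^k(2j-1)$, and $(x)_{(m)}=x(x+1)\cdots(x+m-1)$ is the Pochhammer symbol (with $(x)_{(0)}=1$). *)

From Stdlib Require Import Reals Lra Lia.
Open Scope R_scope.

(* Points of R^{d+1} are represented as functions nat -> R; only the
   coordinates 0..d matter. *)
Definition inner (d : nat) (x y : nat -> R) : R :=
  sum_f_R0 (fun l => x l * y l) d.

Definition on_sphere (d : nat) (x : nat -> R) : Prop := inner d x x = 1.

Definition pt_distinct (d : nat) (x y : nat -> R) : Prop :=
  exists l, (l <= d)%nat /\ x l <> y l.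

Definition gcd_dist (d : nat) (x y : nat -> R) : R := acos (inner d x y).

Definition posdef_on_sphere (d : nat) (psi : R -> R) : Prop :=
  forall (m : nat) (c : nat -> R) (x : nat -> nat -> R),
    (1 <= m)%nat ->
    (forall i, (i < m)%nat -> on_sphere d (x i)) ->
    (forall i j, (i < m)%nat -> (j < m)%nat -> i <> j -> pt_distinct d (x i) (x j)) ->
    0 <= sum_f_R0 (fun i => sum_f_R0 (fun j =>
            c i * c j * psi (gcd_dist d (x i) (x j))) (m - 1)) (m - 1).

Definition continuous_on_0_pi (psi : R -> R) : Prop :=
  forall t, 0 <= t <= PI -> forall eps, 0 < eps -> exists delta, 0 < delta /\
    forall s, 0 <= s <= PI -> Rabs (s - t) < delta -> Rabs (psi s - psi t) < eps.

Definition Psi (d : nat) (psi : R -> R) : Prop :=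
  continuous_on_0_pi psi /\ psi 0 = 1 /\ posdef_on_sphere d psi.

(* Gegenbauer polynomials C_n^lam(x) via the three-term recurrence
   n C_n = 2 (n + lam - 1) x C_{n-1} - (n + 2 lam - 2) C_{n-2}. *)
Fixpoint gegen (lam x : R) (n : nat) : R :=
  match n with
  | O => 1
  | S m =>
    match m with
    | O => 2 * lam * x
    | S p => (2 * (INR n + lam - 1) * x * gegen lam x m
              - (INR n + 2 * lam - 2) * gegen lam x p) / INR n
    end
  end.

Definition lam_of (d : nat) : R := (INR d - 1) / 2.

Definition gegen_norm (d : nat) (n : nat) (t : R) : R :=
  gegen (lam_of d) t n / gegen (lam_of d) 1 n.

Definition schoenberg_coeffs (d : nat) (psi : R -> R) (b : nat -> R) : Prop :=
  (forall n, 0 <= b n) /\ infinite_sum b 1 /\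
  forall theta, 0 <= theta <= PI ->
    infinite_sum (fun n => b n * gegen_norm d n (cos theta)) (psi theta).

Fixpoint dfact_odd (k : nat) : nat :=
  match k with O => 1%nat | S j => ((2 * k - 1) * dfact_odd j)%nat end.

Fixpoint poch (x : R) (m : nat) : R :=
  match m with O => 1 | S j => poch x j * (x + INR j) end.

Definition u_coef (i n k : nat) : R :=
  (-1) ^ i * (INR (dfact_odd k) / 2 ^ k) * C k i * C (2 * k + n) n
  / (poch (INR n + INR i + 1/2) (k - i) * poch (INR n + INR k + 3/2) i).

(** Write λ = (d-1)/2 and G_n^λ(θ) = C_n^λ(cos θ) / C_n^λ(1), so that a Schoenberg
  expansion reads ψ(θ) = Σ_n b_{n,d} G_n^{(d-1)/2}(θ); for d = 2, G_n^{1/2}(θ) = P_n(cos θ).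

  1. Trigonometric form: C_n^λ(cos θ) = Σ_{j ≤ n} c_j c_{n-j} cos((n-2j)θ) with
     c_j = (λ)_j / j!, proved by the three-term recurrence.  For λ > 0 it gives
     |G_n^λ| ≤ 1, G_n^λ(0) = 1, smoothness and Gegenbauer's differential equation.
  2. Raising: G_n^λ = α_n(λ) G_n^{λ+1} + (1 - α_n(λ)) G_{n-2}^{λ+1}.  Iterating it from
     λ = 1/2 to λ_k = k + 1/2 gives the connection formula
     P_m(cos θ) = Σ_{i ≤ k, 2i ≤ m} u_i(m-2i, k) G_{m-2i}^{λ_k}(θ),
     the coefficients being identified with u_i through their recursion in k.
  3. Orthogonality: the G_n^{λ_k} are orthogonal on [0, π] for the weight sin^{2k+1} θ
     (Sturm–Liouville argument), with positive norms.
  4. Since |G| ≤ 1 and Σ_n b_n = 1, Schoenberg series converge uniformly and can be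
     integrated termwise.  Integrating ψ(θ) G_n^{λ_k}(θ) sin^{2k+1} θ through the
     (2k+2)-dimensional expansion, and through the Legendre expansion combined with the
     connection formula, yields the theorem.
*)

From Coquelicot Require Import Coquelicot.
From Stdlib Require Import Reals Lra Lia Factorial.
Open Scope R_scope.

Ltac push_INR := repeat rewrite ?plus_INR, ?mult_INR, ?S_INR in *; simpl INR in *.

Lemma INR_fact_pos j : 0 < INR (fact j).
Proof. apply lt_0_INR, lt_O_fact. Qed.

Lemma INR_S_pos j : 0 < INR (S j).
Proof. apply lt_0_INR; lia. Qed.

Lemma poch_pos x j : 0 < x -> 0 < poch x j.
Proof.
  intros Hx. induction j as [|j IH]; simpl; [lra|].
  apply Rmult_lt_0_compat; [exact IH|]. pose proof (pos_INR j). lra.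
Qed.

Lemma poch_raise x j : poch (x + 1) j * x = poch x j * (x + INR j).
Proof.
  induction j as [|j IH]; [simpl; ring|]. simpl poch.
  transitivity (poch (x + 1) j * x * (x + 1 + INR j)); [ring|].
  rewrite IH, S_INR. ring.
Qed.

Lemma poch_Sl x m : poch x (S m) = x * poch (x + 1) m.
Proof.
  induction m as [|m IH]; [simpl; ring|].
  change (poch x (S (S m))) with (poch x (S m) * (x + INR (S m))).
  rewrite IH. simpl poch. rewrite S_INR. ring.
Qed.

(** ** Trigonometric form of the Gegenbauer polynomials *)

(* c_j = (λ)_j / j!, the coefficients of the expansion
   C_n^λ(cos θ) = Σ_{j ≤ n} c_j c_{n-j} cos((n - 2j) θ). *)
Definition gcoef (lam : R) (j : nat) : R := poch lam j / INR (fact j).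

Lemma gcoef_0 lam : gcoef lam 0 = 1.
Proof. unfold gcoef; simpl; field. Qed.

Lemma gcoef_S lam j : gcoef lam (S j) = gcoef lam j * (lam + INR j) / INR (S j).
Proof.
  unfold gcoef. simpl poch. rewrite fact_simpl, mult_INR.
  pose proof (INR_fact_pos j). pose proof (INR_S_pos j). field; lra.
Qed.

Lemma gcoef_pos lam j : 0 < lam -> 0 < gcoef lam j.
Proof. intros. apply Rdiv_lt_0_compat; [apply poch_pos; auto|apply INR_fact_pos]. Qed.

Lemma gcoef_raise lam j : lam <> 0 -> gcoef (lam + 1) j = gcoef lam j * (lam + INR j) / lam.
Proof.
  intros H. unfold gcoef. pose proof (INR_fact_pos j).
  replace (poch (lam + 1) j) with (poch lam j * (lam + INR j) / lam)
    by (rewrite <- poch_raise; field; auto).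
  field. split; lra.
Qed.

(* The coefficient of cos((n - 2j) θ) in C_n^λ(cos θ), zero outside 0 ≤ j ≤ n. *)
Definition tcoef (lam : R) (n j : nat) : R :=
  if (j <=? n)%nat then gcoef lam j * gcoef lam (n - j) else 0.

Lemma tcoef_out lam n j : (n < j)%nat -> tcoef lam n j = 0.
Proof. intros H; unfold tcoef. destruct (Nat.leb_spec j n); [lia|auto]. Qed.

Lemma tcoef_in lam n j : (j <= n)%nat -> tcoef lam n j = gcoef lam j * gcoef lam (n - j).
Proof. intros H; unfold tcoef. destruct (Nat.leb_spec j n); [auto|lia]. Qed.

Lemma tcoef_nonneg lam n j : 0 < lam -> 0 <= tcoef lam n j.
Proof.
  intros. unfold tcoef. destruct (j <=? n)%nat; [|lra].
  apply Rlt_le, Rmult_lt_0_compat; apply gcoef_pos; auto.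
Qed.

(* The sequence a shifted one step to the right (prepended with 0); on cosine sums it
   lowers every frequency by 2, see cos_sum_shift. *)
Definition shiftc (a : nat -> R) (j : nat) : R :=
  match j with O => 0 | S j' => a j' end.

(* The three-term recurrence of the coefficients, read off from
   n C_n = 2(n+λ-1) cos θ C_{n-1} - (n+2λ-2) C_{n-2}. *)
Lemma tcoef_rec lam n j : (j <= n + 2)%nat ->
  INR (n + 2) * tcoef lam (n + 2) j =
  (INR (n + 2) + lam - 1) * (tcoef lam (n + 1) j + shiftc (tcoef lam (n + 1)) j)
  - (INR (n + 2) + 2 * lam - 2) * shiftc (tcoef lam n) j.
Proof.
  intros Hj. destruct j as [|j]; simpl shiftc.
  - rewrite !tcoef_in, !Nat.sub_0_r by lia.
    replace (n + 2)%nat with (S (S n)) by lia. replace (n + 1)%nat with (S n) by lia.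
    rewrite (gcoef_S lam (S n)), gcoef_0. pose proof (INR_S_pos (S n)).
    push_INR. field. lra.
  - destruct (Nat.eq_dec j (n + 1)) as [->|Hne].
    + rewrite (tcoef_out lam (n + 1)), (tcoef_out lam n), !tcoef_in by lia.
      replace (n + 2 - S (n + 1))%nat with 0%nat by lia.
      replace (n + 1 - (n + 1))%nat with 0%nat by lia.
      replace (S (n + 1)) with (S (S n)) by lia. replace (n + 1)%nat with (S n) by lia.
      rewrite (gcoef_S lam (S n)), gcoef_0. pose proof (INR_S_pos (S n)).
      push_INR. field. lra.
    + destruct (Nat.le_exists_sub j n ltac:(lia)) as [l [-> _]].
      rewrite !tcoef_in by lia.
      replace (l + j + 2 - S j)%nat with (S l) by lia.
      replace (l + j + 1 - S j)%nat with l by lia.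
      replace (l + j + 1 - j)%nat with (S l) by lia.
      replace (l + j - j)%nat with l by lia.
      rewrite !gcoef_S. pose proof (INR_S_pos j). pose proof (INR_S_pos l).
      push_INR. field. split; lra.
Qed.

Lemma tcoef_raise lam p j : 0 < lam -> (j <= p + 2)%nat ->
  (INR (p + 2) + lam) / lam * tcoef lam (p + 2) j =
  tcoef (lam + 1) (p + 2) j - shiftc (tcoef (lam + 1) p) j.
Proof.
  intros Hl Hj. destruct j as [|j]; simpl shiftc.
  - rewrite !tcoef_in, !Nat.sub_0_r, !gcoef_raise, gcoef_0 by lia || lra.
    push_INR. field. lra.
  - destruct (Nat.eq_dec j (p + 1)) as [->|Hne].
    + rewrite (tcoef_out _ p), !tcoef_in by lia.
      replace (p + 2 - S (p + 1))%nat with 0%nat by lia.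
      rewrite !gcoef_raise, gcoef_0 by lra. push_INR. field. lra.
    + destruct (Nat.le_exists_sub j p ltac:(lia)) as [l [-> _]].
      rewrite !tcoef_in by lia.
      replace (l + j + 2 - S j)%nat with (S l) by lia.
      replace (l + j - j)%nat with l by lia.
      rewrite !gcoef_raise, !gcoef_S by lra.
      pose proof (INR_S_pos j). pose proof (INR_S_pos l).
      push_INR. field. repeat split; lra.
Qed.

Definition cos_sum (N : nat) (x : R) (a : nat -> R) (th : R) : R :=
  sum_f_R0 (fun j => a j * cos ((x - 2 * INR j) * th)) N.

Lemma cos_sum_extend N x a th : a (S N) = 0 -> cos_sum (S N) x a th = cos_sum N x a th.
Proof. intros H; unfold cos_sum; simpl; rewrite H; ring. Qed.

Lemma cos_sum_shift N x a th : cos_sum (S N) (x + 2) (shiftc a) th = cos_sum N x a th.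
Proof.
  unfold cos_sum. rewrite decomp_sum by lia. simpl pred. simpl shiftc.
  rewrite Rmult_0_l, Rplus_0_l. apply sum_eq; intros j _.
  rewrite S_INR. f_equal. f_equal. ring.
Qed.

Lemma cos_sum_plus N x a b th :
  cos_sum N x (fun j => a j + b j) th = cos_sum N x a th + cos_sum N x b th.
Proof. unfold cos_sum. rewrite <- plus_sum. apply sum_eq; intros; ring. Qed.

Lemma cos_sum_lin N x a b d c0 c1 c2 th :
  (forall j, (j <= N)%nat -> c0 * a j = c1 * b j - c2 * d j) ->
  c0 * cos_sum N x a th = c1 * cos_sum N x b th - c2 * cos_sum N x d th.
Proof.
  intros H. unfold cos_sum. rewrite !scal_sum, <- minus_sum.
  apply sum_eq; intros j Hj.
  transitivity ((c0 * a j) * cos ((x - 2 * INR j) * th)); [ring|].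
  rewrite H by lia. ring.
Qed.

Lemma cos_sum_mul_cos N x a th :
  2 * cos th * cos_sum N x a th = cos_sum N (x + 1) a th + cos_sum N (x - 1) a th.
Proof.
  unfold cos_sum. rewrite scal_sum, <- plus_sum. apply sum_eq; intros j _.
  replace ((x + 1 - 2 * INR j) * th) with ((x - 2 * INR j) * th + th) by ring.
  replace ((x - 1 - 2 * INR j) * th) with ((x - 2 * INR j) * th - th) by ring.
  rewrite cos_plus, cos_minus. ring.
Qed.

(* T_n^λ(θ) := Σ_j c_j c_{n-j} cos((n-2j)θ), to be identified with C_n^λ(cos θ). *)
Definition gegen_trig (lam : R) (n : nat) (th : R) : R :=
  cos_sum n (INR n) (tcoef lam n) th.

(* T^λ_{p+2} and T^λ_p written over the common frequency range p+2, p, ..., -(p+2). *)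
Lemma gegen_trig_top lam p th :
  gegen_trig lam (S (S p)) th = cos_sum (S (S p)) (INR p + 2) (tcoef lam (S (S p))) th.
Proof. unfold gegen_trig. f_equal. push_INR. ring. Qed.

Lemma gegen_trig_low lam p th :
  gegen_trig lam p th = cos_sum (S (S p)) (INR p + 2) (shiftc (tcoef lam p)) th.
Proof.
  unfold gegen_trig. rewrite cos_sum_extend, cos_sum_shift by (simpl; apply tcoef_out; lia).
  reflexivity.
Qed.

Lemma gegen_trig_rec lam p th :
  gegen_trig lam (S (S p)) th = (2 * (INR (S (S p)) + lam - 1) * cos th * gegen_trig lam (S p) th
     - (INR (S (S p)) + 2 * lam - 2) * gegen_trig lam p th) / INR (S (S p)).
Proof.
  assert (Hmid : 2 * cos th * gegen_trig lam (S p) th =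
     cos_sum (S (S p)) (INR p + 2)
       (fun j => tcoef lam (S p) j + shiftc (tcoef lam (S p)) j) th).
  { unfold gegen_trig. rewrite cos_sum_mul_cos, cos_sum_plus.
    rewrite (cos_sum_extend (S p)) by (apply tcoef_out; lia).
    replace (INR p + 2) with ((INR (S p) - 1) + 2) by (push_INR; ring).
    rewrite cos_sum_shift. f_equal. f_equal. push_INR. ring. }
  pose proof (INR_S_pos (S p)).
  apply (Rmult_eq_reg_l (INR (S (S p)))); [|lra].
  replace (INR (S (S p)) * ((2 * (INR (S (S p)) + lam - 1) * cos th * gegen_trig lam (S p) th
     - (INR (S (S p)) + 2 * lam - 2) * gegen_trig lam p th) / INR (S (S p))))
    with ((INR (S (S p)) + lam - 1) * (2 * cos th * gegen_trig lam (S p) th)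
     - (INR (S (S p)) + 2 * lam - 2) * gegen_trig lam p th) by (field; lra).
  rewrite Hmid, gegen_trig_top, gegen_trig_low. apply cos_sum_lin.
  intros j Hj. pose proof (tcoef_rec lam p j) as E.
  replace (p + 2)%nat with (S (S p)) in E by lia.
  replace (p + 1)%nat with (S p) in E by lia. apply E. lia.
Qed.

Lemma gegen_trig_0 lam th : gegen_trig lam 0 th = 1.
Proof.
  unfold gegen_trig, cos_sum, tcoef. simpl. rewrite gcoef_0.
  replace ((0 - 2 * 0) * th) with 0 by ring. rewrite cos_0; ring.
Qed.

Lemma gegen_trig_1 lam th : gegen_trig lam 1 th = 2 * lam * cos th.
Proof.
  unfold gegen_trig, cos_sum, tcoef. simpl. replace (1 - 0)%nat with 1%nat by lia.
  change 1%nat with (S 0). rewrite gcoef_S, gcoef_0. simpl INR.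
  replace ((1 - 2 * 0) * th) with th by ring.
  replace ((1 - 2 * 1) * th) with (- th) by ring. rewrite cos_neg. field.
Qed.

(* Both sides satisfy the same three-term recurrence and initial values. *)
Lemma gegen_cos lam th n : gegen lam (cos th) n = gegen_trig lam n th.
Proof.
  enough (H : gegen lam (cos th) n = gegen_trig lam n th /\
              gegen lam (cos th) (S n) = gegen_trig lam (S n) th) by apply H.
  induction n as [|n [IH1 IH2]].
  - rewrite gegen_trig_0, gegen_trig_1. split; simpl; ring.
  - split; [exact IH2|]. rewrite gegen_trig_rec, <- IH1, <- IH2. reflexivity.
Qed.

(** ** Normalized Gegenbauer functions *)

Lemma gegen_at_1 lam n : gegen lam 1 n = poch (2 * lam) n / INR (fact n).
Proof.
  enough (H : gegen lam 1 n = poch (2 * lam) n / INR (fact n) /\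
              gegen lam 1 (S n) = poch (2 * lam) (S n) / INR (fact (S n))) by apply H.
  induction n as [|n [IH1 IH2]]; [simpl; split; field|].
  split; [exact IH2|].
  change (gegen lam 1 (S (S n))) with ((2 * (INR (S (S n)) + lam - 1) * 1 * gegen lam 1 (S n)
    - (INR (S (S n)) + 2 * lam - 2) * gegen lam 1 n) / INR (S (S n))).
  rewrite IH1, IH2. cbn [poch]. rewrite !fact_simpl, !mult_INR.
  pose proof (INR_fact_pos n). pose proof (pos_INR n).
  push_INR. field. repeat split; lra.
Qed.

(* Hence T_n^λ(0) = C_n^λ(1) > 0 for λ > 0: the normalization below is legitimate. *)
Lemma gegen_trig_at_0 lam n : gegen_trig lam n 0 = poch (2 * lam) n / INR (fact n).
Proof. rewrite <- gegen_at_1, <- cos_0, gegen_cos. reflexivity. Qed.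

Lemma gegen_trig_at_0_pos lam n : 0 < lam -> 0 < gegen_trig lam n 0.
Proof.
  intros. rewrite gegen_trig_at_0.
  apply Rdiv_lt_0_compat; [apply poch_pos; lra|apply INR_fact_pos].
Qed.

(* Since all coefficients are nonnegative, T_n^λ attains its maximum modulus at θ = 0. *)
Lemma gegen_trig_bound lam n th : 0 < lam -> Rabs (gegen_trig lam n th) <= gegen_trig lam n 0.
Proof.
  intros Hl. unfold gegen_trig, cos_sum.
  eapply Rle_trans; [apply sum_f_R0_triangle|].
  apply sum_Rle; intros j _. rewrite Rmult_0_r, cos_0, Rmult_1_r, Rabs_mult.
  pose proof (tcoef_nonneg lam n j Hl).
  rewrite (Rabs_right (tcoef lam n j)) by lra.
  rewrite <- (Rmult_1_r (tcoef lam n j)) at 2. apply Rmult_le_compat_l; [lra|].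
  apply Rabs_le, COS_bound.
Qed.

Definition gnorm (lam : R) (n : nat) (th : R) : R := gegen_trig lam n th / gegen_trig lam n 0.

Lemma gegen_norm_gnorm d n th : gegen_norm d n (cos th) = gnorm (lam_of d) n th.
Proof. unfold gegen_norm, gnorm. rewrite <- cos_0, !gegen_cos. reflexivity. Qed.

Lemma gnorm_bound lam n th : 0 < lam -> Rabs (gnorm lam n th) <= 1.
Proof.
  intros Hl. unfold gnorm. pose proof (gegen_trig_at_0_pos lam n Hl).
  rewrite Rabs_div, (Rabs_right (gegen_trig lam n 0)) by lra.
  apply (Rmult_le_reg_r (gegen_trig lam n 0)); [lra|].
  field_simplify; [apply gegen_trig_bound; auto|lra].
Qed.

Lemma gnorm_0 lam n : 0 < lam -> gnorm lam n 0 = 1.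
Proof. intros Hl. unfold gnorm. pose proof (gegen_trig_at_0_pos lam n Hl). field; lra. Qed.

(** ** Raising the parameter λ by one *)

Lemma gegen_trig_raise lam p th : 0 < lam ->
  gegen_trig lam (S (S p)) th =
  lam / (INR (S (S p)) + lam) * (gegen_trig (lam + 1) (S (S p)) th - gegen_trig (lam + 1) p th).
Proof.
  intros Hl. pose proof (pos_INR (S (S p))).
  apply (Rmult_eq_reg_l ((INR (S (S p)) + lam) / lam)); [|apply Rgt_not_eq, Rdiv_lt_0_compat; lra].
  replace ((INR (S (S p)) + lam) / lam *
     (lam / (INR (S (S p)) + lam) * (gegen_trig (lam + 1) (S (S p)) th - gegen_trig (lam + 1) p th)))
    with (1 * gegen_trig (lam + 1) (S (S p)) th - 1 * gegen_trig (lam + 1) p th) by (field; lra).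
  rewrite !gegen_trig_top, gegen_trig_low. apply cos_sum_lin.
  intros j Hj. rewrite !Rmult_1_l. pose proof (tcoef_raise lam p j Hl) as E.
  replace (p + 2)%nat with (S (S p)) in E by lia. apply E. lia.
Qed.

Definition raise_weight (lam : R) (n : nat) : R :=
  (2 * lam + INR n) * (2 * lam + 1 + INR n) / ((2 * INR n + 2 * lam) * (2 * lam + 1)).

(* For n < 2 there is no G_{n-2} term: α_n = 1. *)
Lemma raise_weight_low lam n : 0 < lam -> (n < 2)%nat -> raise_weight lam n = 1.
Proof.
  intros Hl Hn. unfold raise_weight.
  destruct n as [|[|n]]; [| |lia]; simpl INR; field; lra.
Qed.

Lemma raise_weight_at_0 lam n : 0 < lam ->
  raise_weight lam n = lam * gegen_trig (lam + 1) n 0 / ((INR n + lam) * gegen_trig lam n 0).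
Proof.
  intros Hl. rewrite !gegen_trig_at_0. unfold raise_weight.
  set (x := 2 * lam).
  replace (2 * (lam + 1)) with (x + 1 + 1) by (unfold x; ring).
  assert (H1 : poch (x + 1) n * x = poch x n * (x + INR n)) by apply poch_raise.
  assert (H2 : poch (x + 1 + 1) n * (x + 1) = poch (x + 1) n * (x + 1 + INR n))
    by apply poch_raise.
  assert (Hx : 0 < x) by (unfold x; lra).
  assert (Hp : 0 < poch x n) by (apply poch_pos; lra).
  assert (H3 : poch (x + 1 + 1) n = poch x n * (x + INR n) * (x + 1 + INR n) / (x * (x + 1))).
  { apply (Rmult_eq_reg_r (x * (x + 1))); [|apply Rmult_integral_contrapositive_currified; lra].
    transitivity (poch (x + 1 + 1) n * (x + 1) * x); [ring|]. rewrite H2.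
    transitivity (poch (x + 1) n * x * (x + 1 + INR n)); [ring|]. rewrite H1.
    field. split; lra. }
  rewrite H3. pose proof (INR_fact_pos n). pose proof (pos_INR n).
  unfold x in *. field. repeat split; lra.
Qed.

Lemma gnorm_raise lam n th : 0 < lam ->
  gnorm lam n th =
  raise_weight lam n * gnorm (lam + 1) n th + (1 - raise_weight lam n) * gnorm (lam + 1) (n - 2) th.
Proof.
  intros Hl. destruct (Nat.lt_ge_cases n 2) as [Hn|Hn].
  - rewrite raise_weight_low by auto.
    destruct n as [|[|n]]; [| |lia]; unfold gnorm;
      rewrite ?gegen_trig_0, ?gegen_trig_1, ?cos_0; simpl INR; field; lra.
  - destruct n as [|[|p]]; [lia|lia|].
    rewrite raise_weight_at_0 by auto.
    replace (S (S p) - 2)%nat with p by lia. unfold gnorm.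
    rewrite !(gegen_trig_raise lam p) by auto.
    pose proof (gegen_trig_at_0_pos (lam + 1) (S (S p)) ltac:(lra)).
    pose proof (gegen_trig_at_0_pos (lam + 1) p ltac:(lra)).
    pose proof (gegen_trig_at_0_pos lam (S (S p)) Hl) as Hpos.
    pose proof (pos_INR (S (S p))).
    rewrite gegen_trig_raise in Hpos by auto.
    assert (gegen_trig (lam + 1) (S (S p)) 0 - gegen_trig (lam + 1) p 0 <> 0).
    { intro Hc. rewrite Hc, Rmult_0_r in Hpos. lra. }
    field. repeat split; lra.
Qed.

(** ** The coefficients u_i(n,k) *)

Lemma C_pos a b : (b <= a)%nat -> 0 < C a b.
Proof.
  intros. unfold C. apply Rdiv_lt_0_compat; [apply INR_fact_pos|].
  apply Rmult_lt_0_compat; apply INR_fact_pos.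
Qed.

Lemma C_n0 a : C a 0 = 1.
Proof.
  unfold C. rewrite Nat.sub_0_r. pose proof (INR_fact_pos a). simpl. field. lra.
Qed.

Lemma C_nn a : C a a = 1.
Proof.
  unfold C. rewrite Nat.sub_diag. pose proof (INR_fact_pos a). simpl. field. lra.
Qed.

Lemma C_up_k k n :
  C (2 * S k + n) n = C (2 * k + n) n * INR (2 * k + n + 1) * INR (2 * k + n + 2)
                      / (INR (2 * k + 1) * INR (2 * k + 2)).
Proof.
  unfold C.
  replace (2 * S k + n)%nat with (S (S (2 * k + n))) by lia.
  replace (S (S (2 * k + n)) - n)%nat with (S (S (2 * k))) by lia.
  replace (2 * k + n - n)%nat with (2 * k)%nat by lia.
  rewrite !fact_simpl, !mult_INR.
  pose proof (INR_fact_pos n). pose proof (INR_fact_pos (2 * k)).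
  pose proof (INR_fact_pos (2 * k + n)). pose proof (pos_INR (2 * k)).
  push_INR. field. repeat split; lra.
Qed.

Lemma C_up_n k n :
  C (2 * k + (n + 2)) (n + 2) = C (2 * k + n) n * INR (2 * k + n + 1) * INR (2 * k + n + 2)
                                / (INR (n + 1) * INR (n + 2)).
Proof.
  unfold C.
  replace (2 * k + (n + 2))%nat with (S (S (2 * k + n))) by lia.
  replace (n + 2)%nat with (S (S n)) by lia.
  replace (S (S (2 * k + n)) - S (S n))%nat with (2 * k)%nat by lia.
  replace (2 * k + n - n)%nat with (2 * k)%nat by lia.
  rewrite !fact_simpl, !mult_INR.
  pose proof (INR_fact_pos n). pose proof (INR_fact_pos (2 * k)).
  pose proof (INR_fact_pos (2 * k + n)). pose proof (pos_INR n).
  push_INR. field. repeat split; lra.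
Qed.

Lemma C_row_step k i : (i < k)%nat ->
  C k (S i) = C (S k) (S i) * INR (k - i) / INR (S k) /\
  C k i = C (S k) (S i) * INR (S i) / INR (S k).
Proof.
  intros Hik. destruct (Nat.le_exists_sub (S i) k ltac:(lia)) as [r [-> _]].
  unfold C.
  replace (r + S i - S i)%nat with r by lia.
  replace (S (r + S i) - S i)%nat with (S r) by lia.
  replace (r + S i - i)%nat with (S r) by lia.
  rewrite !fact_simpl, !mult_INR.
  pose proof (INR_fact_pos r). pose proof (INR_fact_pos i).
  pose proof (INR_fact_pos (r + S i)). pose proof (pos_INR r). pose proof (pos_INR i).
  push_INR. split; field; repeat split; lra.
Qed.

Lemma dfact_S k : INR (dfact_odd (S k)) = (2 * INR k + 1) * INR (dfact_odd k).
Proof.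
  change (dfact_odd (S k)) with ((2 * S k - 1) * dfact_odd k)%nat.
  rewrite mult_INR. f_equal. replace (2 * S k - 1)%nat with (S (2 * k)) by lia.
  push_INR. ring.
Qed.

Lemma dfact_pos k : 0 < INR (dfact_odd k).
Proof.
  induction k as [|k IH]; [simpl; lra|]. rewrite dfact_S. pose proof (pos_INR k).
  apply Rmult_lt_0_compat; lra.
Qed.

(* λ_k = k + 1/2, the parameter (d-1)/2 of the sphere S^d with d = 2k+2. *)
Definition half_lam (k : nat) : R := INR k + 1 / 2.

Lemma half_lam_pos k : 0 < half_lam k.
Proof. unfold half_lam. pose proof (pos_INR k). lra. Qed.

Lemma half_lam_S k : half_lam (S k) = half_lam k + 1.
Proof. unfold half_lam. rewrite S_INR. ring. Qed.

(* The recursion of u_i(n,k) in k, mirroring the raising formula: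
   u_i(n,k+1) = u_i(n,k) α_k(n) + u_{i-1}(n+2,k) (1 - α_k(n+2)), where α_k = α(λ_k),
   with the obvious boundary cases i = 0 and i = k+1. *)
Lemma u_coef_rec_first k n :
  u_coef 0 n (S k) = u_coef 0 n k * raise_weight (half_lam k) n.
Proof.
  unfold u_coef, raise_weight, half_lam. rewrite !C_n0, !Nat.sub_0_r, C_up_k, dfact_S.
  change (2 ^ S k) with (2 * 2 ^ k). cbn [poch].
  set (x := INR n + INR 0 + 1 / 2).
  assert (Hx : 0 < x) by (unfold x; pose proof (pos_INR n); simpl INR; lra).
  pose proof (poch_pos x k Hx). pose proof (C_pos (2 * k + n) n ltac:(lia)).
  pose proof (dfact_pos k). pose proof (pos_INR k). pose proof (pos_INR n).
  unfold x in *. push_INR.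
  field. repeat split; try lra. apply pow_nonzero; lra.
Qed.

Lemma u_coef_rec_mid k n i : (i < k)%nat ->
  u_coef (S i) n (S k) = u_coef (S i) n k * raise_weight (half_lam k) n
                         + u_coef i (n + 2) k * (1 - raise_weight (half_lam k) (n + 2)).
Proof.
  intros Hik. unfold u_coef. destruct (C_row_step k i Hik) as [E1 E2].
  rewrite E1, E2, C_up_k, C_up_n, dfact_S.
  change ((-1) ^ S i) with (-1 * (-1) ^ i). change (2 ^ S k) with (2 * 2 ^ k).
  destruct (Nat.le_exists_sub (S i) k ltac:(lia)) as [r [Hr _]].
  replace (S k - S i)%nat with (S r) by lia.
  replace (k - i)%nat with (S r) by lia.
  replace (k - S i)%nat with r by lia.
  set (x := INR n + INR (S i) + 1 / 2).
  replace (INR (n + 2) + INR i + 1 / 2) with (x + 1) by (unfold x; push_INR; ring).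
  set (y := INR n + INR k + 3 / 2).
  replace (INR (n + 2) + INR k + 3 / 2) with (y + 1 + 1) by (unfold y; push_INR; ring).
  replace (INR n + INR (S k) + 3 / 2) with (y + 1) by (unfold y; push_INR; ring).
  assert (Hx : 0 < x) by (unfold x; pose proof (pos_INR n); pose proof (pos_INR (S i)); lra).
  assert (Hy : 0 < y) by (unfold y; pose proof (pos_INR n); pose proof (pos_INR k); lra).
  assert (P1 : poch (x + 1) (S r) = poch x (S r) * (x + INR (S r)) / x).
  { pose proof (poch_raise x (S r)) as H. rewrite <- H. field. lra. }
  assert (P2 : poch y (S i) = poch (y + 1) (S i) * y / (y + INR (S i))).
  { pose proof (poch_raise y (S i)) as H. rewrite H. pose proof (pos_INR (S i)). field. lra. }
  rewrite P1, P2, (poch_Sl (y + 1) i). cbn [poch].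
  pose proof (poch_pos x r Hx). pose proof (poch_pos (y + 1 + 1) i ltac:(lra)).
  pose proof (C_pos (S k) (S i) ltac:(lia)). pose proof (C_pos (2 * k + n) n ltac:(lia)).
  pose proof (dfact_pos k). pose proof (pos_INR r). pose proof (pos_INR i). pose proof (pos_INR n).
  unfold raise_weight, half_lam, x, y in *. subst k. push_INR.
  field. repeat split; try lra. apply pow_nonzero; lra.
Qed.

Lemma u_coef_rec_last k n :
  u_coef (S k) n (S k) = u_coef k (n + 2) k * (1 - raise_weight (half_lam k) (n + 2)).
Proof.
  unfold u_coef. rewrite !C_nn, !Nat.sub_diag, C_up_k, C_up_n, dfact_S.
  change ((-1) ^ S k) with (-1 * (-1) ^ k). change (2 ^ S k) with (2 * 2 ^ k).
  set (y := INR n + INR k + 3 / 2).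
  replace (INR (n + 2) + INR k + 3 / 2) with (y + 1 + 1) by (unfold y; push_INR; ring).
  replace (INR n + INR (S k) + 3 / 2) with (y + 1) by (unfold y; push_INR; ring).
  rewrite (poch_Sl (y + 1) k). cbn [poch].
  assert (Hy : 0 < y) by (unfold y; pose proof (pos_INR n); pose proof (pos_INR k); lra).
  pose proof (poch_pos (y + 1 + 1) k ltac:(lra)). pose proof (C_pos (2 * k + n) n ltac:(lia)).
  pose proof (dfact_pos k). pose proof (pos_INR k). pose proof (pos_INR n).
  unfold raise_weight, half_lam, y in *. push_INR.
  field. repeat split; try lra. apply pow_nonzero; lra.
Qed.

(** ** The connection formula from Legendre to G^{k+1/2} *)

(* Coefficient of G_{m-2i}^{λ_k} in the expansion of P_m(cos θ) = G_m^{1/2}(θ). *)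
Definition conn_coef (k m i : nat) : R :=
  if andb (i <=? k)%nat (2 * i <=? m)%nat then u_coef i (m - 2 * i) k else 0.

Lemma conn_coef_0 m : conn_coef 0 m 0 = 1.
Proof.
  unfold conn_coef, u_coef. simpl. rewrite Nat.sub_0_r, !C_nn. simpl. field.
Qed.

Lemma conn_coef_rec k m i : (i <= S k)%nat ->
  conn_coef (S k) m i =
    (if (i <=? k)%nat then conn_coef k m i * raise_weight (half_lam k) (m - 2 * i) else 0)
    + shiftc (fun i => conn_coef k m i * (1 - raise_weight (half_lam k) (m - 2 * i))) i.
Proof.
  intros Hi. unfold conn_coef. destruct i as [|i]; cbn [shiftc].
  - rewrite !Nat.mul_0_r, !Nat.sub_0_r. cbn [Nat.leb andb]. rewrite u_coef_rec_first. ring.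
  - destruct (Nat.leb_spec (2 * S i) m) as [Hm|Hm].
    + rewrite (proj2 (Nat.leb_le (2 * i) m)), (proj2 (Nat.leb_le (S i) (S k))) by lia.
      replace (m - 2 * i)%nat with ((m - 2 * S i) + 2)%nat by lia.
      destruct (Nat.leb_spec (S i) k) as [Hk|Hk].
      * rewrite (proj2 (Nat.leb_le i k)) by lia. cbn [andb].
        apply u_coef_rec_mid. lia.
      * assert (i = k) by lia. subst i.
        rewrite Nat.leb_refl. cbn [andb]. rewrite u_coef_rec_last. ring.
    + rewrite !Bool.andb_false_r.
      destruct (Nat.leb_spec (2 * i) m); rewrite ?Bool.andb_false_r;
        destruct (i <=? k)%nat, (S i <=? k)%nat; cbn [andb]; try ring.
      all: rewrite (raise_weight_low _ (m - 2 * i)) by (apply half_lam_pos || lia); ring.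
Qed.

Lemma connection_step k m th :
  sum_f_R0 (fun i => conn_coef k m i * gnorm (half_lam k) (m - 2 * i) th) k =
  sum_f_R0 (fun i => conn_coef (S k) m i * gnorm (half_lam (S k)) (m - 2 * i) th) (S k).
Proof.
  set (a := fun i => conn_coef k m i * raise_weight (half_lam k) (m - 2 * i)).
  set (b := fun i => conn_coef k m i * (1 - raise_weight (half_lam k) (m - 2 * i))).
  set (G := gnorm (half_lam (S k))).
  transitivity (sum_f_R0 (fun i => a i * G (m - 2 * i)%nat th) k
                + sum_f_R0 (fun i => b i * G (m - 2 * S i)%nat th) k).
  { rewrite <- plus_sum. apply sum_eq. intros i _.
    unfold a, b, G. rewrite half_lam_S, gnorm_raise by apply half_lam_pos.
    replace (m - 2 * i - 2)%nat with (m - 2 * S i)%nat by lia. ring. }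
  transitivity (sum_f_R0 (fun i => (if (i <=? k)%nat then a i else 0) * G (m - 2 * i)%nat th) (S k)
                + sum_f_R0 (fun i => shiftc b i * G (m - 2 * i)%nat th) (S k)).
  { rewrite tech5, (proj2 (Nat.leb_gt (S k) k)) by lia.
    rewrite (decomp_sum _ (S k)) by lia. cbn [pred shiftc].
    rewrite !Rmult_0_l, Rplus_0_l, Rplus_0_r.
    f_equal. apply sum_eq. intros i Hi. rewrite (proj2 (Nat.leb_le i k)) by lia. reflexivity. }
  rewrite <- plus_sum. apply sum_eq. intros i Hi. rewrite conn_coef_rec by lia.
  unfold a, b. ring.
Qed.

Lemma connection k m th :
  gnorm (1 / 2) m th = sum_f_R0 (fun i => conn_coef k m i * gnorm (half_lam k) (m - 2 * i) th) k.
Proof.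
  induction k as [|k IH].
  - simpl. rewrite conn_coef_0, Nat.sub_0_r. unfold half_lam. simpl INR.
    rewrite Rplus_0_l. ring.
  - rewrite IH. apply connection_step.
Qed.

(** ** Orthogonality of G^{k+1/2} for the weight sin^{2k+1} *)

Lemma is_derive_Rmult (f g : R -> R) x df dg : is_derive f x df -> is_derive g x dg ->
  is_derive (fun t => f t * g t) x (df * g x + f x * dg).
Proof. intros H1 H2. apply (is_derive_mult f g x df dg H1 H2). intros; apply Rmult_comm. Qed.

Lemma is_derive_sum_f_R0 (f df : nat -> R -> R) N x :
  (forall j, is_derive (f j) x (df j x)) ->
  is_derive (fun t => sum_f_R0 (fun j => f j t) N) x (sum_f_R0 (fun j => df j x) N).
Proof.
  intros H. induction N as [|N IH]; simpl; [apply H|].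
  apply (is_derive_plus (fun t => sum_f_R0 (fun j => f j t) N) (f (S N))); auto.
Qed.

Lemma sum_telescope (f g : nat -> R) N : f 0%nat = 0 -> g N = 0 ->
  (forall j, (j < N)%nat -> g j = f (S j)) -> sum_f_R0 (fun j => f j - g j) N = 0.
Proof.
  intros H0 HN H.
  assert (Hpart : forall M, (M <= N)%nat -> sum_f_R0 (fun j => f j - g j) M = f 0%nat - g M).
  { induction M; intros; simpl; [ring|]. rewrite IHM, H by lia. ring. }
  rewrite Hpart, H0, HN by lia. ring.
Qed.

Definition freq (n j : nat) : R := INR n - 2 * INR j.

Definition gegen_trig_d1 (lam : R) (n : nat) (th : R) : R :=
  sum_f_R0 (fun j => - (tcoef lam n j * freq n j) * sin (freq n j * th)) n.

Definition gegen_trig_d2 (lam : R) (n : nat) (th : R) : R :=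
  sum_f_R0 (fun j => - (tcoef lam n j * freq n j * freq n j) * cos (freq n j * th)) n.

Lemma gegen_trig_derive lam n x : is_derive (gegen_trig lam n) x (gegen_trig_d1 lam n x).
Proof.
  apply (is_derive_sum_f_R0 (fun j t => tcoef lam n j * cos ((INR n - 2 * INR j) * t))
                            (fun j t => - (tcoef lam n j * freq n j) * sin (freq n j * t))).
  intros j. unfold freq. auto_derive; auto. ring.
Qed.

Lemma gegen_trig_d1_derive lam n x : is_derive (gegen_trig_d1 lam n) x (gegen_trig_d2 lam n x).
Proof.
  apply (is_derive_sum_f_R0 (fun j t => - (tcoef lam n j * freq n j) * sin (freq n j * t))
                            (fun j t => - (tcoef lam n j * freq n j * freq n j) * cos (freq n j * t))).
  intros j. auto_derive; auto. ring.
Qed.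

Lemma gegen_trig_cont lam n x : continuous (gegen_trig lam n) x.
Proof. apply (@ex_derive_continuous R_AbsRing R_NormedModule). eexists. apply gegen_trig_derive. Qed.

Lemma gegen_trig_ode lam n th :
  sin th * gegen_trig_d2 lam n th + 2 * lam * cos th * gegen_trig_d1 lam n th
  + INR n * (INR n + 2 * lam) * sin th * gegen_trig lam n th = 0.
Proof.
  set (mu := INR n * (INR n + 2 * lam)).
  unfold gegen_trig_d2, gegen_trig_d1, gegen_trig, cos_sum.
  rewrite !scal_sum, <- !plus_sum.
  set (T := fun j => tcoef lam n j * (mu - freq n j * freq n j - 2 * lam * freq n j)
                     * sin ((freq n j + 1) * th) / 2).
  set (T' := fun j => tcoef lam n j * (mu - freq n j * freq n j + 2 * lam * freq n j)
                      * sin ((freq n j - 1) * th) / 2).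
  transitivity (sum_f_R0 (fun j => T j - T' j) n).
  { apply sum_eq. intros j _. unfold T, T'.
    replace ((freq n j + 1) * th) with (freq n j * th + th) by ring.
    replace ((freq n j - 1) * th) with (freq n j * th - th) by ring.
    rewrite sin_plus, sin_minus. fold (freq n j). field. }
  apply sum_telescope.
  - unfold T, freq, mu. simpl INR. field.
  - unfold T', freq, mu. field.
  - intros j Hj. unfold T, T'.
    replace ((freq n (S j) + 1) * th) with ((freq n j - 1) * th) by (unfold freq; rewrite S_INR; ring).
    f_equal. f_equal.
    destruct (Nat.le_exists_sub (S j) n ltac:(lia)) as [l [Hl _]].
    rewrite !tcoef_in by lia.
    replace (n - j)%nat with (S l) by lia. replace (n - S j)%nat with l by lia.
    rewrite !gcoef_S. subst n. unfold freq, mu.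
    pose proof (INR_S_pos j). pose proof (INR_S_pos l).
    push_INR. field. split; lra.
Qed.

Lemma sin_pow_derive N x : is_derive (fun t => sin t ^ N) x (INR N * sin x ^ pred N * cos x).
Proof. auto_derive; auto. ring. Qed.

Lemma sin_pow_cont N x : continuous (fun t => sin t ^ N) x.
Proof.
  apply (@ex_derive_continuous R_AbsRing R_NormedModule). eexists. apply sin_pow_derive.
Qed.

Lemma is_RInt_unscale (f : R -> R) a b c l : c <> 0 ->
  is_RInt (fun t => c * f t) a b l -> is_RInt f a b (l / c).
Proof.
  intros Hc H. apply (is_RInt_scal _ a b (/ c) l) in H.
  replace (l / c) with (scal (/ c) l) by (unfold scal; simpl; unfold mult; simpl; unfold Rdiv; ring).
  eapply is_RInt_ext; [|exact H].
  intros x _. unfold scal; simpl; unfold mult; simpl. field. auto.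
Qed.

Section Orthogonality.

Variable k : nat.
Let lam := half_lam k.
(* The weight sin^{2λ} θ of the Gegenbauer system, 2λ = 2k+1. *)
Let wt := fun t => sin t ^ S (2 * k).

Let T := gegen_trig lam.
Let T' := gegen_trig_d1 lam.
Let T'' := gegen_trig_d2 lam.

Let mu (n : nat) : R := INR n * (INR n + 2 * lam).

Let wronskian (n m : nat) (t : R) : R := T n t * T' m t - T m t * T' n t.

Lemma wronskian_derive n m x :
  is_derive (wronskian n m) x (T n x * T'' m x - T m x * T'' n x).
Proof.
  assert (HD : is_derive (wronskian n m) x
     ((T' n x * T' m x + T n x * T'' m x) - (T' m x * T' n x + T m x * T'' n x))).
  { apply (is_derive_minus (fun t => T n t * T' m t) (fun t => T m t * T' n t)).
    - apply is_derive_Rmult; [apply gegen_trig_derive|apply gegen_trig_d1_derive].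
    - apply is_derive_Rmult; [apply gegen_trig_derive|apply gegen_trig_d1_derive]. }
  replace (T n x * T'' m x - T m x * T'' n x) with
    ((T' n x * T' m x + T n x * T'' m x) - (T' m x * T' n x + T m x * T'' n x)) by ring.
  exact HD.
Qed.

Lemma sturm_liouville n m x :
  is_derive (fun t => wt t * wronskian n m t) x ((mu n - mu m) * (wt x * (T n x * T m x))).
Proof.
  pose proof (gegen_trig_ode lam n x) as On. pose proof (gegen_trig_ode lam m x) as Om.
  fold (T n) (T' n) (T'' n) (T m) (T' m) (T'' m) in On, Om.
  replace ((mu n - mu m) * (wt x * (T n x * T m x))) with
    (INR (S (2 * k)) * sin x ^ pred (S (2 * k)) * cos x * wronskian n m x
     + wt x * (T n x * T'' m x - T m x * T'' n x)).
  { apply is_derive_Rmult; [apply sin_pow_derive|apply wronskian_derive]. }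
  unfold wt, wronskian, mu. change (pred (S (2 * k))) with (2 * k)%nat.
  change (sin x ^ S (2 * k)) with (sin x * sin x ^ (2 * k)).
  transitivity (INR (S (2 * k)) * sin x ^ (2 * k) * cos x * (T n x * T' m x - T m x * T' n x)
      + sin x ^ (2 * k) * (T n x * (sin x * T'' m x) - T m x * (sin x * T'' n x))); [ring|].
  assert (Em : sin x * T'' m x =
    - (2 * lam * cos x * T' m x + INR m * (INR m + 2 * lam) * sin x * T m x)) by lra.
  assert (En : sin x * T'' n x =
    - (2 * lam * cos x * T' n x + INR n * (INR n + 2 * lam) * sin x * T n x)) by lra.
  rewrite Em, En. unfold lam, half_lam. rewrite S_INR, mult_INR. simpl (INR 2). field.
Qed.

Lemma gegen_trig_orth n m : n <> m -> is_RInt (fun t => wt t * (T n t * T m t)) 0 PI 0.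
Proof.
  intros Hnm.
  assert (Hc : mu n - mu m <> 0).
  { replace (mu n - mu m) with ((INR n - INR m) * (INR n + INR m + 2 * lam)) by (unfold mu; ring).
    pose proof (pos_INR n). pose proof (pos_INR m). pose proof (half_lam_pos k).
    apply Rmult_integral_contrapositive_currified; [|unfold lam; lra].
    intro E. apply Hnm, INR_eq. lra. }
  assert (Hbd : forall t, sin t = 0 -> wt t * wronskian n m t = 0).
  { intros t Ht. unfold wt. change (sin t ^ S (2 * k)) with (sin t * sin t ^ (2 * k)).
    rewrite Ht. ring. }
  assert (HI : is_RInt (fun t => (mu n - mu m) * (wt t * (T n t * T m t))) 0 PI
                 (minus (wt PI * wronskian n m PI) (wt 0 * wronskian n m 0))).
  { apply (is_RInt_derive (fun t => wt t * wronskian n m t)).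
    - intros x _. apply sturm_liouville.
    - intros x _. apply (continuous_mult (fun _ => mu n - mu m)); [apply continuous_const|].
      apply (continuous_mult wt); [apply sin_pow_cont|].
      apply (continuous_mult (T n)); apply gegen_trig_cont. }
  rewrite (Hbd PI sin_PI), (Hbd 0 sin_0) in HI.
  apply is_RInt_unscale in HI; [|exact Hc].
  replace (minus 0 0 / (mu n - mu m)) with 0 in HI by (change (minus 0 0) with (0 - 0); field; exact Hc).
  exact HI.
Qed.
End Orthogonality.

Lemma gnorm_cont lam n x : continuous (gnorm lam n) x.
Proof.
  apply (continuous_ext (fun t => gegen_trig lam n t * / gegen_trig lam n 0)); [reflexivity|].
  apply (continuous_mult (gegen_trig lam n)); [apply gegen_trig_cont|apply continuous_const].
Qed.

Lemma gnorm_orth k n j : j <> n ->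
  is_RInt (fun t => gnorm (half_lam k) j t * (gnorm (half_lam k) n t * sin t ^ S (2 * k)))
    0 PI 0.
Proof.
  intros Hjn. set (lam := half_lam k).
  pose proof (gegen_trig_at_0_pos lam j (half_lam_pos k)).
  pose proof (gegen_trig_at_0_pos lam n (half_lam_pos k)).
  set (c := gegen_trig lam j 0 * gegen_trig lam n 0).
  assert (Hc : c <> 0) by (apply Rmult_integral_contrapositive_currified; lra).
  assert (HI : is_RInt (fun t => c * (gnorm lam j t * (gnorm lam n t * sin t ^ S (2 * k))))
                 0 PI 0).
  { eapply is_RInt_ext; [|exact (gegen_trig_orth k j n Hjn)].
    intros x _. change (sin x ^ S (2 * k) * (gegen_trig lam j x * gegen_trig lam n x) =
      c * (gnorm lam j x * (gnorm lam n x * sin x ^ S (2 * k)))).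
    unfold c, gnorm. field. lra. }
  apply is_RInt_unscale in HI; [|exact Hc].
  replace (0 / c) with 0 in HI by (field; exact Hc). exact HI.
Qed.

Lemma continuous_eps (f : R -> R) x : continuous f x -> forall eps, 0 < eps ->
  exists d, 0 < d /\ forall y, Rabs (y - x) < d -> Rabs (f y - f x) < eps.
Proof.
  intros Hc eps He. destruct (proj1 (filterlim_locally f (f x)) Hc (mkposreal eps He)) as [d Hd].
  exists d. split; [apply cond_pos|]. intros y Hy. apply (Hd y). exact Hy.
Qed.

(* The weighted norms are positive: G_n^λ is close to G_n^λ(0) = 1 near θ = 0. *)
Lemma gnorm_norm_pos k n :
  0 < RInt (fun t => gnorm (half_lam k) n t * (gnorm (half_lam k) n t * sin t ^ S (2 * k))) 0 PI.
Proof.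
  set (lam := half_lam k). set (G := gnorm lam n).
  set (f := fun t => G t * (G t * sin t ^ S (2 * k))).
  assert (Hcont : forall x, continuous f x).
  { intros x. apply (continuous_mult G); [apply gnorm_cont|].
    apply (continuous_mult G); [apply gnorm_cont|apply sin_pow_cont]. }
  assert (Hex : forall a b, ex_RInt f a b) by (intros; apply (@ex_RInt_continuous R_CompleteNormedModule); auto).
  destruct (continuous_eps G 0 (gnorm_cont lam n 0) (1 / 2) ltac:(lra)) as [d [Hd HG]].
  unfold G in HG at 2. rewrite gnorm_0 in HG by apply half_lam_pos.
  pose proof PI_RGT_0.
  set (t0 := Rmin (d / 2) (PI / 2)).
  assert (Ht0 : 0 < t0 <= PI / 2) by (unfold t0; split; [apply Rmin_glb_lt; lra|apply Rmin_r]).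
  assert (Ht0d : t0 <= d / 2) by apply Rmin_l.
  rewrite <- (RInt_Chasles f 0 t0 PI) by auto.
  assert (Hnear : 0 < RInt f 0 t0).
  { apply RInt_gt_0; [lra| |intros; apply Hcont].
    intros x Hx. specialize (HG x ltac:(rewrite Rminus_0_r, Rabs_right; lra)).
    apply Rabs_def2 in HG. pose proof (sin_gt_0 x ltac:(lra) ltac:(lra)).
    unfold f. replace (G x * (G x * sin x ^ S (2 * k))) with ((G x * G x) * sin x ^ S (2 * k))
      by ring.
    apply Rmult_lt_0_compat; [nra|apply pow_lt; auto]. }
  assert (Hfar : 0 <= RInt f t0 PI).
  { apply RInt_ge_0; [lra|auto|]. intros x Hx. pose proof (sin_ge_0 x ltac:(lra) ltac:(lra)).
    unfold f. replace (G x * (G x * sin x ^ S (2 * k))) with ((G x * G x) * sin x ^ S (2 * k))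
      by ring.
    apply Rmult_le_pos; [apply Rle_0_sqr|apply pow_le; auto]. }
  change (0 < RInt f 0 t0 + RInt f t0 PI). lra.
Qed.

(** ** Termwise integration of Schoenberg series *)

(* Projection of R onto [0, π]; it lets a function given on [0, π] be treated
   as a function on R without changing its integral over [0, π]. *)
Definition clampP (t : R) : R := Rmax 0 (Rmin t PI).

Lemma clampP_in t : 0 <= clampP t <= PI.
Proof.
  unfold clampP. pose proof PI_RGT_0. split; [apply Rmax_l|].
  apply Rmax_lub; [lra|apply Rmin_r].
Qed.

Lemma clampP_id t : 0 <= t <= PI -> clampP t = t.
Proof. intros H. unfold clampP. rewrite Rmin_left, Rmax_right; lra. Qed.

Lemma is_RInt_sum_f_R0 (b : nat -> R) (G : nat -> R -> R) (w : R -> R) (I : nat -> R) N :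
  (forall j, is_RInt (fun t => G j t * w t) 0 PI (I j)) ->
  is_RInt (fun t => sum_f_R0 (fun j => b j * G j t) N * w t) 0 PI (sum_f_R0 (fun j => b j * I j) N).
Proof.
  intros H. induction N as [|N IH]; simpl.
  - eapply is_RInt_ext; [|exact (is_RInt_scal _ 0 PI (b 0%nat) _ (H 0%nat))].
    intros; unfold scal; simpl; unfold mult; simpl; ring.
  - eapply is_RInt_ext; [|exact (is_RInt_plus _ _ 0 PI _ _ IH (is_RInt_scal _ 0 PI (b (S N)) _ (H (S N))))].
    intros; unfold scal, plus; simpl; unfold mult; simpl; ring.
Qed.

(* Tail bound for a series Σ b_j g_j with b_j ≥ 0, Σ b_j = 1 and |g_j| ≤ 1; it makes
   the convergence of a Schoenberg series uniform. *)
Lemma schoenberg_tail (b g : nat -> R) (s : R) N :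
  (forall j, 0 <= b j) -> infinite_sum b 1 -> (forall j, Rabs (g j) <= 1) ->
  infinite_sum (fun j => b j * g j) s ->
  Rabs (s - sum_f_R0 (fun j => b j * g j) N) <= 1 - sum_f_R0 b N.
Proof.
  intros Hb Hs Hg Hsum.
  apply (sum_maj1 (fun j _ => b j * g j) b 0 s 1 N); [exact Hsum|exact Hs|].
  intros j. rewrite Rabs_mult, Rabs_right by (apply Rle_ge, Hb).
  rewrite <- (Rmult_1_r (b j)) at 2. apply Rmult_le_compat_l; auto.
Qed.

(* If ψ = Σ b_j G_j on [0, π] with b_j ≥ 0, Σ b_j = 1 and |G_j| ≤ 1, then for a bounded
   weight w the integral of ψ w is the sum of the integrals of b_j G_j w (here that sum is
   eventually constant, equal to L). *)
Lemma schoenberg_series_integral (b : nat -> R) (G : nat -> R -> R) (psi w : R -> R)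
    (I : nat -> R) (L : R) :
  (forall j, 0 <= b j) -> infinite_sum b 1 ->
  (forall j t, Rabs (G j t) <= 1) -> (forall t, Rabs (w t) <= 1) ->
  (forall t, 0 <= t <= PI -> infinite_sum (fun j => b j * G j t) (psi t)) ->
  (forall j, is_RInt (fun t => G j t * w t) 0 PI (I j)) ->
  (exists N0, forall N, (N0 <= N)%nat -> sum_f_R0 (fun j => b j * I j) N = L) ->
  is_RInt (fun t => psi t * w t) 0 PI L.
Proof.
  intros Hb Hs HG Hw Hpsi HI [N0 HL].
  set (partial := fun N t => sum_f_R0 (fun j => b j * G j (clampP t)) N * w t).
  set (g := fun t => psi (clampP t) * w t).
  assert (Hpartial : forall N, is_RInt (partial N) 0 PI (sum_f_R0 (fun j => b j * I j) N)).
  { intros N. eapply is_RInt_ext; [|apply (is_RInt_sum_f_R0 b G w I N HI)].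
    intros x Hx. rewrite Rmin_left, Rmax_right in Hx by (pose proof PI_RGT_0; lra).
    unfold partial. rewrite clampP_id by lra. reflexivity. }
  assert (Hunif : filterlim partial Hierarchy.eventually
                    (locally (g : fct_UniformSpace R R_CompleteNormedModule))).
  { apply filterlim_locally. intros eps.
    destruct (Hs eps (cond_pos eps)) as [N1 HN1]. exists N1. intros N HN t.
    change (Rabs (partial N t - g t) < eps). unfold partial, g.
    set (e := psi (clampP t) - sum_f_R0 (fun j => b j * G j (clampP t)) N).
    assert (He : Rabs e <= 1 - sum_f_R0 b N).
    { apply schoenberg_tail; auto. apply Hpsi, clampP_in. }
    specialize (HN1 N HN). unfold Rdist in HN1. apply Rabs_def2 in HN1.
    replace (sum_f_R0 (fun j => b j * G j (clampP t)) N * w t - psi (clampP t) * w t)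
      with (- e * w t) by (unfold e; ring).
    rewrite Rabs_mult, Rabs_Ropp.
    pose proof (Hw t). pose proof (Rabs_pos (w t)). pose proof (Rabs_pos e).
    assert (Rabs e * Rabs (w t) <= Rabs e) by (rewrite <- (Rmult_1_r (Rabs e)) at 2; nra).
    lra. }
  destruct (filterlim_RInt partial 0 PI Hierarchy.eventually _ g _ Hpartial Hunif)
    as [If [HIf HgI]].
  assert (HL' : filterlim (fun N => sum_f_R0 (fun j => b j * I j) N) Hierarchy.eventually
                  (locally L)).
  { apply (filterlim_ext_loc (fun _ => L)); [|apply filterlim_const].
    exists N0. intros N HN. symmetry. apply HL. lia. }
  rewrite (filterlim_locally_unique _ _ _ HIf HL') in HgI.
  eapply is_RInt_ext; [|exact HgI]. intros x Hx.
  rewrite Rmin_left, Rmax_right in Hx by (pose proof PI_RGT_0; lra).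
  unfold g. rewrite clampP_id by lra. reflexivity.
Qed.

Lemma infinite_sum_ext (f g : nat -> R) l : (forall j, f j = g j) ->
  infinite_sum f l -> infinite_sum g l.
Proof.
  intros E H eps He. destruct (H eps He) as [N HN]. exists N. intros m Hm.
  rewrite <- (sum_eq f g m) by (intros; apply E). apply HN; auto.
Qed.

Lemma lam_of_2k2 k : lam_of (2 * k + 2) = half_lam k.
Proof. unfold lam_of, half_lam. push_INR. field. Qed.

Lemma lam_of_2 : lam_of 2 = 1 / 2.
Proof. unfold lam_of. simpl. field. Qed.

Lemma schoenberg_expansion d psi b : schoenberg_coeffs d psi b ->
  forall t, 0 <= t <= PI -> infinite_sum (fun j => b j * gnorm (lam_of d) j t) (psi t).
Proof.
  intros [_ [_ Hexp]] t Ht. apply (infinite_sum_ext _ _ _ (fun j => f_equal _ (gegen_norm_gnorm d j t))).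
  exact (Hexp t Ht).
Qed.

Lemma sum_single (f : nat -> R) m N : (m <= N)%nat -> (forall j, j <> m -> f j = 0) ->
  sum_f_R0 f N = f m.
Proof.
  intros Hm H. induction N as [|N IH].
  - assert (m = 0)%nat by lia. subst. reflexivity.
  - destruct (Nat.eq_dec m (S N)) as [->|Hne]; simpl.
    + rewrite sum_eq_R0; [ring|]. intros j Hj. apply H. lia.
    + rewrite IH, (H (S N)) by lia. ring.
Qed.

Lemma sum_swap (F : nat -> nat -> R) N K :
  sum_f_R0 (fun m => sum_f_R0 (fun i => F m i) K) N =
  sum_f_R0 (fun i => sum_f_R0 (fun m => F m i) N) K.
Proof.
  induction N as [|N IH]; simpl; [reflexivity|].
  rewrite IH, <- plus_sum. reflexivity.
Qed.

Lemma sin_pow_bound N t : Rabs (sin t ^ N) <= 1.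
Proof.
  rewrite <- RPow_abs. pose proof (Rabs_pos (sin t)).
  assert (Rabs (sin t) <= 1) by (apply Rabs_le, SIN_bound).
  induction N; simpl; [lra|]. rewrite <- (Rmult_1_r 1).
  apply Rmult_le_compat; auto. apply pow_le; auto.
Qed.

(** ** Moments against G_n^{k+1/2}(θ) sin^{2k+1} θ *)

(* The test function extracting the n-th coefficient on S^{2k+2}. *)
Definition test_fn (k n : nat) (t : R) : R := gnorm (half_lam k) n t * sin t ^ S (2 * k).

Definition sqnorm (k n : nat) : R := RInt (fun t => gnorm (half_lam k) n t * test_fn k n t) 0 PI.

(* ∫_0^π G_j^{k+1/2} · test_fn = [j = n] · sqnorm. *)
Definition moment (k n j : nat) : R := if Nat.eq_dec j n then sqnorm k n else 0.

Lemma test_fn_bound k n t : Rabs (test_fn k n t) <= 1.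
Proof.
  unfold test_fn. rewrite Rabs_mult, <- (Rmult_1_r 1).
  apply Rmult_le_compat; try apply Rabs_pos;
    [apply gnorm_bound, half_lam_pos|apply sin_pow_bound].
Qed.

Lemma gnorm_moment k n j :
  is_RInt (fun t => gnorm (half_lam k) j t * test_fn k n t) 0 PI (moment k n j).
Proof.
  unfold moment. destruct (Nat.eq_dec j n) as [->|Hne].
  - apply (@RInt_correct R_CompleteNormedModule), (@ex_RInt_continuous R_CompleteNormedModule).
    intros x _. apply (continuous_mult (gnorm _ n)); [apply gnorm_cont|].
    apply (continuous_mult (gnorm _ n)); [apply gnorm_cont|apply sin_pow_cont].
  - exact (gnorm_orth k n j Hne).
Qed.

Lemma gnorm_moment_sum k n (b : nat -> R) N : (n <= N)%nat ->
  sum_f_R0 (fun j => b j * moment k n j) N = b n * sqnorm k n.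
Proof.
  intros HN. rewrite (sum_single _ n N HN).
  - unfold moment. destruct (Nat.eq_dec n n); [reflexivity|congruence].
  - intros j Hj. unfold moment. destruct (Nat.eq_dec j n); [congruence|ring].
Qed.

(* By the connection formula, the Legendre moments are finite combinations of moments. *)
Definition legendre_moment (k n m : nat) : R :=
  sum_f_R0 (fun i => conn_coef k m i * moment k n (m - 2 * i)) k.

Lemma legendre_moment_integral k n m :
  is_RInt (fun t => gnorm (1 / 2) m t * test_fn k n t) 0 PI (legendre_moment k n m).
Proof.
  eapply is_RInt_ext; [|exact (is_RInt_sum_f_R0 (conn_coef k m)
     (fun i => gnorm (half_lam k) (m - 2 * i)) (test_fn k n)
     (fun i => moment k n (m - 2 * i)) k (fun i => gnorm_moment k n (m - 2 * i)))].
  intros x _. cbv beta. rewrite (connection k m x). reflexivity.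
Qed.

Lemma legendre_moment_sum k n (b : nat -> R) N : (n + 2 * k <= N)%nat ->
  sum_f_R0 (fun m => b m * legendre_moment k n m) N =
  sqnorm k n * sum_f_R0 (fun i => u_coef i n k * b (n + 2 * i)%nat) k.
Proof.
  intros HN. unfold legendre_moment.
  transitivity (sum_f_R0 (fun m => sum_f_R0
      (fun i => b m * (conn_coef k m i * moment k n (m - 2 * i))) k) N).
  { apply sum_eq. intros m _. rewrite scal_sum. apply sum_eq. intros; ring. }
  rewrite sum_swap, scal_sum. apply sum_eq. intros i Hi.
  rewrite (sum_single _ (n + 2 * i) N); [|lia|].
  - unfold moment, conn_coef. replace (n + 2 * i - 2 * i)%nat with n by lia.
    destruct (Nat.eq_dec n n); [|congruence].
    rewrite (proj2 (Nat.leb_le i k)), (proj2 (Nat.leb_le (2 * i) (n + 2 * i))) by lia.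
    cbn [andb]. ring.
  - intros m Hm. unfold moment.
    destruct (Nat.eq_dec (m - 2 * i) n); [|ring].
    unfold conn_coef. destruct (Nat.leb_spec (2 * i) m); [lia|].
    rewrite Bool.andb_false_r. ring.
Qed.

(* Integrate ψ · test_fn in two ways: through the (2k+2)-dimensional expansion it gives
   b_{n,2k+2} · sqnorm, through the Legendre expansion sqnorm · Σ_i u_i(n,k) b_{n+2i,2}.
   (The positive definiteness of ψ is only needed for the existence of the expansions,
   which are given.) *)
Theorem theorem2 (k : nat) (hk : (1 <= k)%nat) (psi : R -> R) (b2 bd : nat -> R) :
  Psi (2 * k + 2) psi ->
  schoenberg_coeffs 2 psi b2 ->
  schoenberg_coeffs (2 * k + 2) psi bd ->
  forall n : nat,
    bd n = sum_f_R0 (fun i => u_coef i n k * b2 (n + 2 * i)%nat) k.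
Proof.
  intros _ H2 Hd n.
  pose proof (schoenberg_expansion _ _ _ H2) as Exp2. rewrite lam_of_2 in Exp2.
  pose proof (schoenberg_expansion _ _ _ Hd) as Expd. rewrite lam_of_2k2 in Expd.
  destruct H2 as [Hb2 [Hs2 _]], Hd as [Hbd [Hsd _]].
  assert (Id : is_RInt (fun t => psi t * test_fn k n t) 0 PI (bd n * sqnorm k n)).
  { apply (schoenberg_series_integral bd (gnorm (half_lam k)) psi _ (moment k n));
      auto using test_fn_bound, gnorm_moment.
    - intros; apply gnorm_bound, half_lam_pos.
    - exists n. apply gnorm_moment_sum. }
  assert (I2 : is_RInt (fun t => psi t * test_fn k n t) 0 PI
      (sqnorm k n * sum_f_R0 (fun i => u_coef i n k * b2 (n + 2 * i)%nat) k)).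
  { apply (schoenberg_series_integral b2 (gnorm (1 / 2)) psi _ (legendre_moment k n));
      auto using test_fn_bound, legendre_moment_integral.
    - intros; apply gnorm_bound; lra.
    - exists (n + 2 * k)%nat. apply legendre_moment_sum. }
  assert (Hpos : 0 < sqnorm k n) by exact (gnorm_norm_pos k n).
  apply (Rmult_eq_reg_r (sqnorm k n)); [|lra].
  rewrite <- (is_RInt_unique _ _ _ _ Id), (is_RInt_unique _ _ _ _ I2). ring.
Qed.
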